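(* Let $\mathcal{A}=(Q,\Sigma,t,o)$ be a synchronous automaton with finitely many states. If every state of $\mathcal{A}$ has at least two fixed points in $\Sigma^{\omega}$, then every state of $\mathcal{A}$ has infinitely many fixed points in $\Sigma^{\omega}$.
   Context: A synchronous automaton is a quadruple $(Q,\Sigma,t,o)$ with $Q$ a finite set of states, $\Sigma$ a finite alphabet, $t:Q\times\Sigma\to Q$ and $o:Q\times\Sigma\to\Sigma$. $\Sigma^\omega$ is the set of right-infinite words over $\Sigma$. A state $q_0$ acts on $\omega=\sigma_1\sigma_2\cdots\in\Sigma^\omega$ by $q_0(\omega)=o(q_0,\sigma_1)o(q_1,\sigma_2)o(q_2,\sigma_3)\cdots$ where $q_i=t(q_{i-1},\sigma_i)$. A fixed point of $q$ is an $\omega$ with $q(\omega)=\omega$. *)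

From Stdlib Require List.
From mathcomp Require Import all_boot.
Set Implicit Arguments. Unset Strict Implicit. Unset Printing Implicit Defensive.

Record automaton (Q Sigma : finType) := Automaton {
  trans : Q -> Sigma -> Q;
  out   : Q -> Sigma -> Sigma }.

(* Right-infinite words: w i is the (i+1)-th letter sigma_{i+1}. *)
Definition word (Sigma : Type) := nat -> Sigma.

Fixpoint run (Q Sigma : finType) (A : automaton Q Sigma) (q : Q) (w : word Sigma)
  (i : nat) : Q :=
  match i with
  | 0 => q
  | i'.+1 => trans A (run A q w i') (w i')
  end.

Definition act (Q Sigma : finType) (A : automaton Q Sigma) (q : Q) (w : word Sigma)
  : word Sigma := fun i => out A (run A q w i) (w i).

Definition word_eq (Sigma : Type) (u v : word Sigma) : Prop := forall i, u i = v i.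

Definition is_fixed_point (Q Sigma : finType) (A : automaton Q Sigma) (q : Q)
  (w : word Sigma) : Prop := word_eq (act A q w) w.

Definition two_fixed_points (Q Sigma : finType) (A : automaton Q Sigma) (q : Q) : Prop :=
  exists w1 w2, is_fixed_point A q w1 /\ is_fixed_point A q w2 /\ ~ word_eq w1 w2.

Definition infinitely_many_fixed_points (Q Sigma : finType) (A : automaton Q Sigma)
  (q : Q) : Prop :=
  forall l : seq (word Sigma),
    exists w, is_fixed_point A q w /\ (forall u, List.In u l -> ~ word_eq w u).

From mathcomp Require Import all_boot.
From Stdlib Require Import Classical.

(* Fixed points can be spliced: if w is fixed by q and w' is fixed by the
   state that q reaches after reading the first m letters of w, then the
   first m letters of w followed by w' are fixed by q.  To avoid finitely
   many words u_1, ..., u_n, take a fixed point w of q differing from u_1 at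
   some position i (one of the two fixed points of q does), and splice after
   position i a fixed point of the state reached there that avoids the tails
   of u_2, ..., u_n, obtained by induction on n. *)

Section Splicing.
Variables (Q Sigma : finType) (A : automaton Q Sigma).

Definition splice (w : word Sigma) (m : nat) (w' : word Sigma) : word Sigma :=
  fun i => if i < m then w i else w' (i - m).

Definition shift (m : nat) (v : word Sigma) : word Sigma := fun k => v (m + k).

Lemma splice_prefix w m w' i : i < m -> splice w m w' i = w i.
Proof. by rewrite /splice => ->. Qed.

Lemma splice_shift w m w' k : splice w m w' (m + k) = w' k.
Proof. by rewrite /splice ltnNge leq_addr /= addKn. Qed.

Lemma run_eq_prefix q {x y : word Sigma} {m : nat} : (forall i, i < m -> x i = y i) ->
  forall i, i <= m -> run A q x i = run A q y i.
Proof. by move=> Exy; elim=> [|i IHi] //= ltim; rewrite IHi ?Exy // ltnW. Qed.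

Lemma eq_run q {x y : word Sigma} : word_eq x y -> forall i, run A q x i = run A q y i.
Proof. by move=> Exy; elim=> [|i IHi] //=; rewrite IHi Exy. Qed.

Lemma run_add q x m i : run A q x (m + i) = run A (run A q x m) (shift m x) i.
Proof. by elim: i => [|i IHi]; rewrite ?addn0 // addnS /= IHi. Qed.

Lemma fixed_point_splice q w m w' : is_fixed_point A q w ->
  is_fixed_point A (run A q w m) w' -> is_fixed_point A q (splice w m w').
Proof.
move=> fix_w fix_w' i; rewrite /act.
have pre_w : forall j, j < m -> splice w m w' j = w j by exact: splice_prefix.
have [ltim | leim] := ltnP i m.
  by rewrite (run_eq_prefix q pre_w _ (ltnW ltim)) pre_w //; apply: fix_w.
have shift_w' : word_eq (shift m (splice w m w')) w' by exact: splice_shift.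
rewrite -(subnKC leim) run_add (run_eq_prefix q pre_w _ (leqnn m)).
by rewrite (eq_run _ shift_w') splice_shift; apply: fix_w'.
Qed.

Lemma two_fixed_points_avoid {q : Q} : two_fixed_points A q ->
  forall u, exists w, is_fixed_point A q w /\ ~ word_eq w u.
Proof.
move=> [w1 [w2 [fix1 [fix2 neq12]]]] u.
have [E1 | NE1] := classic (word_eq w1 u); last by exists w1.
by exists w2; split=> // E2; apply: neq12 => i; rewrite E1 E2.
Qed.

Lemma word_neq_witness (v u : word Sigma) : ~ word_eq v u -> exists i, v i <> u i.
Proof. exact: not_all_ex_not. Qed.

Lemma fixed_point_avoiding : (forall q, two_fixed_points A q) ->
  forall (l : seq (word Sigma)) q,
  exists w, is_fixed_point A q w /\ (forall u, List.In u l -> ~ word_eq w u).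
Proof.
move=> two_fix l; move: {2}(size l) (erefl (size l)) => n.
elim: n l => [|n IHn] [|u l] //= size_l q.
  by have [w1 [_ [fix1 _]]] := two_fix q; exists w1.
have [w [fix_w /word_neq_witness [i neq_i]]] := two_fixed_points_avoid (two_fix q) u.
have size_tails : size (List.map (shift i.+1) l) = n by rewrite size_map; case: size_l.
have [w' [fix_w' avoid_w']] := IHn _ size_tails (run A q w i.+1).
exists (splice w i.+1 w'); split; first exact: fixed_point_splice.
move=> v [<- | in_v] E; first by apply: neq_i; rewrite -E splice_prefix.
apply: (avoid_w' _ (List.in_map (shift i.+1) _ _ in_v)) => k.
by rewrite /shift -E splice_shift.
Qed.

End Splicing.

Theorem mainTheorem3 (Q Sigma : finType) (A : automaton Q Sigma) :
  (forall q : Q, two_fixed_points A q) ->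
  forall q : Q, infinitely_many_fixed_points A q.
Proof. by move=> two_fix q l; exact: fixed_point_avoiding. Qed.
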